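(* Let $\mathscr{F}(r)=\int_0^1 t^{r-1/2}\sqrt{1+t}\,\arcsin t\,\mathrm{d}t$ for nonnegative integers $r$. Then $$\mathscr{F}(0)=\int_0^1\frac{\sqrt{1+t}}{\sqrt t}\arcsin t\,\mathrm{d}t=\frac{\pi}{2}\left(\sqrt{2}-1+\ln \left(\sqrt{2}+1\right)-\ln 2\right).$$ *)

From Stdlib Require Import Reals.
From Coquelicot Require Import Coquelicot.
Open Scope R_scope.

(* Integrand of F(r): t^(r-1/2) * sqrt(1+t) * arcsin t.  The real power
   t^(r-1/2) is Rpower t (INR r - 1/2); its value at the single point t = 0
   is irrelevant for the (Riemann) integral. *)
Definition F_integrand (r : nat) (t : R) : R :=
  Rpower t (INR r - 1/2) * sqrt (1 + t) * asin t.

Definition F (r : nat) : R := RInt (F_integrand r) 0 1.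

From Stdlib Require Import Reals Lra.
From Coquelicot Require Import Coquelicot.
Open Scope R_scope.

(* The substitution t = cos^2 p turns F(0) into the proper integral of
   2 sin p sqrt(1 + cos^2 p) asin(cos^2 p) over [0, PI/2].  Since
   x sqrt(1 + x^2) + arsinh x is a primitive of 2 sqrt(1 + x^2), an integration
   by parts reduces it to elementary terms and to the integral of
   h(cos p) = cos p arsinh(cos p) / sqrt(1 + cos^2 p), which is (PI/4) ln 2:
   as a function of b, the integral of h(b cos p) vanishes at b = 0 and has
   derivative (PI/2) b / (1 + b^2), because the b-derivative of h(b cos p) has
   an explicit primitive in p. *)

Lemma is_RInt_derive_interior (G g : R -> R) (a b : R) :
  a < b -> (forall x, continuous g x) ->
  (forall x, a <= x <= b -> continuous G x) ->
  (forall x, a < x < b -> is_derive G x (g x)) ->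
  is_RInt g a b (G b - G a).
Proof.
  intros Hab Hg HG HGg.
  assert (Hint : forall x y, ex_RInt g x y)
    by (intros; apply (@ex_RInt_continuous R_CompleteNormedModule); intros; apply Hg).
  set (P := fun x => RInt g a x).
  assert (HP : forall x, is_derive P x (g x)).
  { intro x. apply is_derive_RInt with a; [|apply Hg].
    apply filter_forall. intro y. apply RInt_correct, Hint. }
  destruct (MVT_gen (fun x => G x - P x) a b (fun _ => 0)) as [c [_ Hc]];
    rewrite ?Rmin_left, ?Rmax_right by lra.
  - intros x Hx. replace 0 with (g x - g x) by ring.
    apply (is_derive_minus G P); [apply HGg; lra | apply HP].
  - intros x Hx. apply continuity_pt_filterlim, (continuous_minus G P).
    + apply HG; lra.
    + apply ex_derive_continuous. eexists; apply HP.
  - assert (HPa : P a = 0) by apply (@RInt_point R_CompleteNormedModule).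
    replace (G b - G a) with (P b) by lra.
    apply (RInt_correct g a b), Hint.
Qed.

Lemma continuous_of_Rabs_le (f g : R -> R) (x : R) :
  locally x (fun y => Rabs (f y - f x) <= g y) -> continuous g x -> g x = 0 ->
  continuous f x.
Proof.
  intros Hfg Hg Hgx. apply filterlim_locally. intro eps.
  apply filterlim_locally with (eps := eps) in Hg.
  generalize (filter_and _ _ Hfg Hg). apply filter_imp. intros y [Hle Hlt].
  change (Rabs (g y - g x) < eps) in Hlt. change (Rabs (f y - f x) < eps).
  rewrite Hgx, Rminus_0_r in Hlt. apply Rabs_def2 in Hlt. lra.
Qed.

Lemma is_derive_asin (x : R) : -1 < x < 1 -> is_derive asin x (/ sqrt (1 - x²)).
Proof.
  intro Hx. apply is_derive_Reals.
  apply derive_pt_eq_1 with (derivable_pt_asin x Hx).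
  rewrite derive_pt_asin. apply Rmult_1_l.
Qed.

Lemma Derive_asin (x : R) : -1 < x < 1 -> Derive asin x = / sqrt (1 - x²).
Proof. intro Hx. apply is_derive_unique, is_derive_asin, Hx. Qed.

Lemma asin_ge_1 (x : R) : 1 <= x -> asin x = PI / 2.
Proof.
  intro Hx. unfold asin.
  destruct (Rle_dec x (-1)); [lra|]. destruct (Rle_dec 1 x); lra.
Qed.

(* For [cos e < x < 1], monotonicity of [sin] gives [PI/2 - e <= asin x]. *)
Lemma continuous_asin_1 : continuous asin 1.
Proof.
  apply continuity_pt_filterlim. intros eps Heps.
  set (e := Rmin eps (PI / 2) / 2).
  assert (He : 0 < e < PI / 2 /\ e < eps).
  { pose proof PI_RGT_0. pose proof (Rmin_l eps (PI / 2)).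
    pose proof (Rmin_r eps (PI / 2)). pose proof (Rmin_glb_lt eps (PI / 2) 0).
    unfold e. lra. }
  assert (Hcos : 0 < cos e < 1).
  { split; [apply cos_gt_0; lra|]. rewrite <- cos_0. apply cos_decreasing_1; lra. }
  exists (1 - cos e). split; [lra|].
  intros x [_ Hx]. simpl in *. unfold R_dist in *. rewrite asin_1.
  destruct (Rle_dec 1 x) as [H1|H1].
  - rewrite asin_ge_1, Rminus_diag, Rabs_R0 by lra. lra.
  - apply Rabs_def2 in Hx. pose proof (asin_bound x).
    assert (PI / 2 - e <= asin x).
    { apply sin_incr_0; try lra. rewrite sin_shift, sin_asin; lra. }
    rewrite Rabs_left1; lra.
Qed.

Lemma continuous_asin (x : R) : -1 <= x <= 1 -> continuous asin x.
Proof.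
  intro Hx.
  destruct (Req_dec x 1) as [->|H1]; [apply continuous_asin_1|].
  destruct (Req_dec x (-1)) as [->|H2].
  - apply (continuous_ext (fun y => - asin (- y))).
    { intro y. rewrite asin_opp. apply Ropp_involutive. }
    apply (continuous_opp (fun y => asin (- y))), (continuous_comp Ropp asin).
    + apply (ex_derive_continuous Ropp). auto_derive. exact I.
    + replace (- -1) with 1 by ring. apply continuous_asin_1.
  - apply (ex_derive_continuous asin). eexists. apply is_derive_asin. lra.
Qed.

Lemma asin_nonneg_le_2x (t : R) : 0 <= t <= 1 / 2 -> 0 <= asin t <= 2 * t.
Proof.
  intro Ht. destruct (Req_dec t 0) as [->|Ht0]; [rewrite asin_0; lra|].
  destruct (MVT_gen asin 0 t (fun x => / sqrt (1 - x²))) as [c [Hc Hmvt]];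
    rewrite ?Rmin_left, ?Rmax_right in * by lra.
  - intros x Hx. apply is_derive_asin. lra.
  - intros x Hx. apply continuity_pt_filterlim, continuous_asin. lra.
  - rewrite asin_0 in Hmvt.
    assert (Hs : 1 / 2 <= sqrt (1 - c²)).
    { rewrite <- (sqrt_square (1 / 2)) by lra. apply sqrt_le_1_alt. unfold Rsqr. nra. }
    assert (Hinv : 0 < / sqrt (1 - c²) <= 2).
    { split; [apply Rinv_0_lt_compat; lra|].
      rewrite <- (Rinv_inv 2). apply Rinv_le_contravar; lra. }
    split; nra.
Qed.

Definition hypot1 (x : R) : R := sqrt (1 + x * x).

Definition arsinh (x : R) : R := ln (x + hypot1 x).

Lemma hypot1_pos (x : R) : 0 < hypot1 x.
Proof. apply sqrt_lt_R0. nra. Qed.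

Lemma hypot1_sqr (x : R) : hypot1 x * hypot1 x = 1 + x * x.
Proof. apply sqrt_sqrt. nra. Qed.

Lemma is_derive_hypot1 (x : R) : is_derive hypot1 x (x / hypot1 x).
Proof.
  pose proof (hypot1_pos x). unfold hypot1 in *.
  auto_derive; [nra | field; lra].
Qed.

Lemma ex_derive_hypot1 (x : R) : ex_derive hypot1 x.
Proof. eexists. apply is_derive_hypot1. Qed.

Lemma Derive_hypot1 (x : R) : Derive hypot1 x = x / hypot1 x.
Proof. apply is_derive_unique, is_derive_hypot1. Qed.

Lemma arsinh_arg_pos (x : R) : 0 < x + hypot1 x.
Proof.
  assert (Habs : Rabs x < hypot1 x).
  { rewrite <- sqrt_Rsqr_abs. apply sqrt_lt_1_alt. unfold Rsqr. nra. }
  apply Rabs_def2 in Habs. lra.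
Qed.

Lemma is_derive_arsinh (x : R) : is_derive arsinh x (/ hypot1 x).
Proof.
  pose proof (arsinh_arg_pos x). pose proof (hypot1_pos x).
  unfold arsinh, hypot1 in *. auto_derive; [repeat split; nra | field; lra].
Qed.

Lemma ex_derive_arsinh (x : R) : ex_derive arsinh x.
Proof. eexists. apply is_derive_arsinh. Qed.

Lemma Derive_arsinh (x : R) : Derive arsinh x = / hypot1 x.
Proof. apply is_derive_unique, is_derive_arsinh. Qed.

Lemma arsinh_0 : arsinh 0 = 0.
Proof. unfold arsinh, hypot1. rewrite Rmult_0_r, Rplus_0_r, sqrt_1, Rplus_0_l. apply ln_1. Qed.

Definition arsinh_quot (x : R) : R := x * arsinh x / hypot1 x.

Definition arsinh_quot' (x : R) : R := arsinh x / hypot1 x ^ 3 + x / hypot1 x ^ 2.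

Lemma is_derive_arsinh_quot (x : R) : is_derive arsinh_quot x (arsinh_quot' x).
Proof.
  pose proof (hypot1_pos x) as Hr. pose proof (hypot1_sqr x) as Hr2.
  unfold arsinh_quot, arsinh_quot'. auto_derive.
  - repeat split; auto using ex_derive_arsinh, ex_derive_hypot1; lra.
  - rewrite Derive_arsinh, Derive_hypot1.
    replace (arsinh x / hypot1 x ^ 3)
      with (arsinh x * (hypot1 x * hypot1 x - x * x) / hypot1 x ^ 3)
      by (rewrite Hr2; field; lra).
    field. lra.
Qed.

Lemma continuous_arsinh_quot_comp (f : R -> R) (x : R) :
  continuous f x -> continuous (fun y => arsinh_quot (f y)) x.
Proof.
  intro Hf. apply (continuous_comp f arsinh_quot x Hf), (ex_derive_continuous arsinh_quot).
  eexists. apply is_derive_arsinh_quot.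
Qed.

Lemma continuous_arsinh_quot' (x : R) : continuous arsinh_quot' x.
Proof.
  pose proof (hypot1_pos x).
  apply (ex_derive_continuous arsinh_quot'). unfold arsinh_quot'. auto_derive.
  repeat split; auto using ex_derive_arsinh, ex_derive_hypot1;
    apply Rgt_not_eq; repeat apply Rmult_lt_0_compat; lra.
Qed.

Lemma is_derive_arsinh_quot_scaled (b p : R) :
  is_derive (fun b => arsinh_quot (b * cos p)) b (cos p * arsinh_quot' (b * cos p)).
Proof.
  apply (is_derive_comp arsinh_quot (fun b => b * cos p)).
  - apply is_derive_arsinh_quot.
  - auto_derive; [exact I | ring].
Qed.

Lemma is_derive_arsinh_quot'_primitive (b p : R) :
  is_derive
    (fun p => p * (b / (1 + b * b))
              + arsinh (b * cos p) * sin p / ((1 + b * b) * hypot1 (b * cos p)))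
    p (cos p * arsinh_quot' (b * cos p)).
Proof.
  pose proof (hypot1_pos (b * cos p)) as Hr. pose proof (hypot1_sqr (b * cos p)) as Hr2.
  pose proof (sin2_cos2 p) as Hsc. unfold Rsqr in Hsc.
  assert (Hb : 0 < 1 + b * b) by nra.
  auto_derive.
  - repeat split; auto using ex_derive_arsinh, ex_derive_hypot1; nra.
  - rewrite Derive_arsinh, Derive_hypot1. unfold arsinh_quot'.
    set (r := hypot1 (b * cos p)) in *. set (L := arsinh (b * cos p)).
    set (c := cos p) in *. set (s := sin p) in *.
    apply Rminus_diag_uniq.
    transitivity ((c * L * ((r * r - 1 - b * c * (b * c)) + b * b * (s * s + c * c - 1))
                   + b * r * ((r * r - 1 - b * c * (b * c)) - (s * s + c * c - 1)))
                  / ((1 + b * b) * r ^ 3)).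
    + field. lra.
    + rewrite Hr2, Hsc. field. lra.
Qed.

Lemma is_RInt_cos_arsinh_quot' (b : R) :
  is_RInt (fun p => cos p * arsinh_quot' (b * cos p)) 0 (PI / 2)
    (PI / 2 * (b / (1 + b * b))).
Proof.
  set (Q := fun p => arsinh (b * cos p) * sin p / ((1 + b * b) * hypot1 (b * cos p))).
  replace (PI / 2 * (b / (1 + b * b)))
    with (minus (PI / 2 * (b / (1 + b * b)) + Q (PI / 2)) (0 * (b / (1 + b * b)) + Q 0)).
  - apply (is_RInt_derive (fun p => p * (b / (1 + b * b)) + Q p)).
    + intros p _. apply is_derive_arsinh_quot'_primitive.
    + intros p _. apply (continuous_mult cos (fun p => arsinh_quot' (b * cos p))).
      * apply continuous_cos.
      * apply (continuous_comp (fun p => b * cos p) arsinh_quot');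
          [|apply continuous_arsinh_quot'].
        apply (ex_derive_continuous (fun p => b * cos p)). auto_derive. exact I.
  - unfold Q. rewrite cos_PI2, sin_0, Rmult_0_r, arsinh_0.
    unfold minus, plus, opp. simpl. field.
    repeat split; apply Rgt_not_eq; try apply hypot1_pos; nra.
Qed.

Lemma continuity_2d_pt_cos_arsinh_quot' (x y : R) :
  continuity_2d_pt (fun u v => cos v * arsinh_quot' (u * cos v)) x y.
Proof.
  assert (Hcos : continuity_2d_pt (fun _ v => cos v) x y)
    by (apply (continuity_1d_2d_pt_comp cos (fun _ v => v));
        [apply continuity_cos | apply continuity_2d_pt_id2]).
  apply (continuity_2d_pt_mult (fun _ v => cos v)); [exact Hcos|].
  apply (continuity_1d_2d_pt_comp arsinh_quot' (fun u v => u * cos v)).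
  - apply continuity_pt_filterlim, continuous_arsinh_quot'.
  - apply (continuity_2d_pt_mult (fun u _ => u)); [apply continuity_2d_pt_id1 | exact Hcos].
Qed.

Lemma is_derive_RInt_arsinh_quot_cos (b : R) :
  is_derive (fun b => RInt (fun p => arsinh_quot (b * cos p)) 0 (PI / 2)) b
    (PI / 2 * (b / (1 + b * b))).
Proof.
  replace (PI / 2 * (b / (1 + b * b)))
    with (RInt (fun p => Derive (fun u => arsinh_quot (u * cos p)) b) 0 (PI / 2)).
  - apply is_derive_RInt_param.
    + apply filter_forall. intros u p _. eexists. apply is_derive_arsinh_quot_scaled.
    + intros p _.
      apply continuity_2d_pt_ext with (fun u v => cos v * arsinh_quot' (u * cos v)).
      * intros u v. symmetry. apply is_derive_unique, is_derive_arsinh_quot_scaled.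
      * apply continuity_2d_pt_cos_arsinh_quot'.
    + apply filter_forall. intro u.
      apply (@ex_RInt_continuous R_CompleteNormedModule). intros p _.
      apply continuous_arsinh_quot_comp.
      apply (ex_derive_continuous (fun p => u * cos p)). auto_derive. exact I.
  - rewrite (RInt_ext _ (fun p => cos p * arsinh_quot' (b * cos p))).
    + apply is_RInt_unique, is_RInt_cos_arsinh_quot'.
    + intros p _. apply is_derive_unique, is_derive_arsinh_quot_scaled.
Qed.

Lemma is_RInt_arsinh_quot_cos :
  is_RInt (fun p => arsinh_quot (cos p)) 0 (PI / 2) (PI / 4 * ln 2).
Proof.
  set (M := fun b => RInt (fun p => arsinh_quot (b * cos p)) 0 (PI / 2)).
  assert (HM0 : M 0 = 0).
  { unfold M. rewrite (RInt_ext _ (fun _ => 0)), RInt_const.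
    - apply Rmult_0_r.
    - intros p _. unfold arsinh_quot, Rdiv. rewrite !Rmult_0_l. reflexivity. }
  assert (HM : M 0 - PI / 4 * ln (1 + 0 * 0) = M 1 - PI / 4 * ln (1 + 1 * 1)).
  { apply (eq_is_derive (fun b => M b - PI / 4 * ln (1 + b * b))); [|lra].
    intros t _.
    replace (@zero R_NormedModule)
      with (PI / 2 * (t / (1 + t * t)) - PI / 4 * (2 * t / (1 + t * t)))
      by (change (@zero R_NormedModule) with 0; field; nra).
    apply (is_derive_minus M).
    - apply is_derive_RInt_arsinh_quot_cos.
    - auto_derive; [nra | field; nra]. }
  rewrite HM0, Rmult_0_r, Rplus_0_r, ln_1 in HM.
  replace (1 + 1 * 1) with 2 in HM by ring.
  apply (is_RInt_ext (fun p => arsinh_quot (1 * cos p))).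
  - intros p _. rewrite Rmult_1_l. reflexivity.
  - replace (PI / 4 * ln 2) with (M 1) by lra.
    apply (RInt_correct (fun p => arsinh_quot (1 * cos p))).
    apply (@ex_RInt_continuous R_CompleteNormedModule). intros p _.
    apply continuous_arsinh_quot_comp.
    apply (ex_derive_continuous (fun p => 1 * cos p)). auto_derive. exact I.
Qed.

Definition hypot1_primitive (x : R) : R := x * hypot1 x + arsinh x.

Lemma is_derive_hypot1_primitive (x : R) : is_derive hypot1_primitive x (2 * hypot1 x).
Proof.
  pose proof (hypot1_pos x) as Hr. pose proof (hypot1_sqr x) as Hr2.
  unfold hypot1_primitive. auto_derive.
  - auto using ex_derive_arsinh, ex_derive_hypot1.
  - rewrite Derive_hypot1, Derive_arsinh.
    apply Rminus_diag_uniq. transitivity ((1 + x * x - hypot1 x * hypot1 x) / hypot1 x).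
    + field. lra.
    + rewrite Hr2. field. lra.
Qed.

Lemma Derive_hypot1_primitive (x : R) : Derive hypot1_primitive x = 2 * hypot1 x.
Proof. apply is_derive_unique, is_derive_hypot1_primitive. Qed.

Lemma sqrt_1_minus_cos_pow4 (p : R) :
  0 <= sin p -> sqrt (1 - (cos p * cos p)²) = sin p * hypot1 (cos p).
Proof.
  intro Hs. pose proof (hypot1_pos (cos p)). pose proof (sin2_cos2 p) as Hsc.
  unfold Rsqr in *.
  rewrite <- (sqrt_square (sin p * hypot1 (cos p))) by nra. f_equal.
  replace (sin p * hypot1 (cos p) * (sin p * hypot1 (cos p)))
    with (sin p * sin p * (hypot1 (cos p) * hypot1 (cos p))) by ring.
  rewrite hypot1_sqr. replace (sin p * sin p) with (1 - cos p * cos p) by lra. ring.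
Qed.

Lemma continuous_asin_cos_sqr (p : R) : continuous (fun p => asin (cos p * cos p)) p.
Proof.
  apply (continuous_comp (fun p => cos p * cos p) asin).
  - apply (ex_derive_continuous (fun p => cos p * cos p)). auto_derive. exact I.
  - apply continuous_asin. pose proof (COS_bound p). split; nra.
Qed.

Definition arsinh_quot_cos_integral (p : R) : R := RInt (fun q => arsinh_quot (cos q)) 0 p.

Lemma is_derive_arsinh_quot_cos_integral (p : R) :
  is_derive arsinh_quot_cos_integral p (arsinh_quot (cos p)).
Proof.
  apply (is_derive_RInt (fun q => arsinh_quot (cos q)) _ 0).
  - apply filter_forall. intro q. apply (RInt_correct (fun q => arsinh_quot (cos q))).
    apply (@ex_RInt_continuous R_CompleteNormedModule). intros y _.
    apply continuous_arsinh_quot_comp, continuous_cos.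
  - apply continuous_arsinh_quot_comp, continuous_cos.
Qed.

Lemma ex_derive_arsinh_quot_cos_integral (p : R) : ex_derive arsinh_quot_cos_integral p.
Proof. eexists. apply is_derive_arsinh_quot_cos_integral. Qed.

Lemma Derive_arsinh_quot_cos_integral (p : R) :
  Derive arsinh_quot_cos_integral p = arsinh_quot (cos p).
Proof. apply is_derive_unique, is_derive_arsinh_quot_cos_integral. Qed.

Definition cos_sqr_integrand (p : R) : R :=
  2 * sin p * hypot1 (cos p) * asin (cos p * cos p).

(* Integration by parts: [d/dp hypot1_primitive (cos p) = - 2 sin p hypot1 (cos p)] and
   [d/dp asin (cos p * cos p) = - 2 cos p / hypot1 (cos p)] on [(0, PI/2)]. *)
Definition cos_sqr_primitive (p : R) : R :=
  - (p + sin p * cos p) - 2 * arsinh_quot_cos_integral p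
  - hypot1_primitive (cos p) * asin (cos p * cos p).

Lemma is_derive_cos_sqr_primitive (p : R) :
  0 < p < PI / 2 -> is_derive cos_sqr_primitive p (cos_sqr_integrand p).
Proof.
  intro Hp.
  assert (Hc : 0 < cos p) by (apply cos_gt_0; lra).
  assert (Hs : 0 < sin p) by (apply sin_gt_0; lra).
  pose proof (sin2_cos2 p) as Hsc. unfold Rsqr in Hsc.
  assert (Hc2 : -1 < cos p * cos p < 1) by (split; nra).
  pose proof (hypot1_pos (cos p)) as Hr.
  unfold cos_sqr_primitive. auto_derive.
  - repeat split.
    + apply ex_derive_arsinh_quot_cos_integral.
    + eexists. apply is_derive_hypot1_primitive.
    + eexists. apply is_derive_asin, Hc2.
  - rewrite Derive_arsinh_quot_cos_integral, Derive_hypot1_primitive.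
    rewrite Derive_asin, sqrt_1_minus_cos_pow4 by lra.
    unfold cos_sqr_integrand, arsinh_quot, hypot1_primitive.
    apply Rminus_diag_uniq.
    transitivity (sin p * sin p + cos p * cos p - 1).
    + field. lra.
    + rewrite Hsc. ring.
Qed.

Lemma continuous_cos_sqr_integrand (p : R) : continuous cos_sqr_integrand p.
Proof.
  apply (continuous_mult (fun p => 2 * sin p * hypot1 (cos p)) (fun p => asin (cos p * cos p))).
  - apply (ex_derive_continuous (fun p => 2 * sin p * hypot1 (cos p))).
    auto_derive. apply ex_derive_hypot1.
  - apply continuous_asin_cos_sqr.
Qed.

Lemma continuous_cos_sqr_primitive (p : R) : continuous cos_sqr_primitive p.
Proof.
  apply (continuous_minus (fun p => - (p + sin p * cos p) - 2 * arsinh_quot_cos_integral p)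
                          (fun p => hypot1_primitive (cos p) * asin (cos p * cos p))).
  - apply (ex_derive_continuous
             (fun p => - (p + sin p * cos p) - 2 * arsinh_quot_cos_integral p)).
    auto_derive. apply ex_derive_arsinh_quot_cos_integral.
  - apply (continuous_mult (fun p => hypot1_primitive (cos p)));
      [|apply continuous_asin_cos_sqr].
    apply (ex_derive_continuous (fun p => hypot1_primitive (cos p))).
    auto_derive. eexists. apply is_derive_hypot1_primitive.
Qed.

Lemma is_RInt_cos_sqr_integrand :
  is_RInt cos_sqr_integrand 0 (PI / 2) (PI / 2 * (sqrt 2 - 1 + ln (sqrt 2 + 1) - ln 2)).
Proof.
  pose proof PI_RGT_0.
  assert (HI0 : arsinh_quot_cos_integral 0 = 0) by apply (@RInt_point R_CompleteNormedModule).
  assert (HI1 : arsinh_quot_cos_integral (PI / 2) = PI / 4 * ln 2)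
    by apply is_RInt_unique, is_RInt_arsinh_quot_cos.
  assert (Hh1 : hypot1 1 = sqrt 2) by (unfold hypot1; f_equal; ring).
  replace (PI / 2 * (sqrt 2 - 1 + ln (sqrt 2 + 1) - ln 2))
    with (cos_sqr_primitive (PI / 2) - cos_sqr_primitive 0).
  - apply is_RInt_derive_interior; [lra | apply continuous_cos_sqr_integrand | |].
    + intros p _. apply continuous_cos_sqr_primitive.
    + apply is_derive_cos_sqr_primitive.
  - unfold cos_sqr_primitive, hypot1_primitive.
    rewrite cos_PI2, sin_PI2, cos_0, sin_0, HI0, HI1, !Rmult_0_l, !Rmult_1_l.
    rewrite asin_0, asin_1, arsinh_0.
    unfold arsinh. rewrite Hh1, (Rplus_comm 1 (sqrt 2)).
    field.
Qed.

Lemma F_integrand_0_pos (t : R) :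
  0 < t -> F_integrand 0 t = sqrt (1 + t) * asin t / sqrt t.
Proof.
  intro Ht. unfold F_integrand. simpl INR. replace (0 - 1 / 2) with (- (/ 2)) by field.
  rewrite Rpower_Ropp, Rpower_sqrt by exact Ht.
  field. apply Rgt_not_eq, sqrt_lt_R0, Ht.
Qed.

(* [Rpower t y = exp (y * ln t)], and [ln] is 0 on nonpositive reals. *)
Lemma F_integrand_0_nonpos (t : R) : t <= 0 -> F_integrand 0 t = sqrt (1 + t) * asin t.
Proof.
  intro Ht.
  assert (Hln : ln t = 0)
    by (unfold ln; destruct (Rlt_dec 0 t); [exfalso; lra | reflexivity]).
  unfold F_integrand, Rpower. rewrite Hln, Rmult_0_r, exp_0. ring.
Qed.

Lemma Rabs_F_integrand_0_le (t : R) :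
  Rabs t <= 1 / 2 -> Rabs (F_integrand 0 t) <= 4 * sqrt (Rabs t).
Proof.
  intro Ht. pose proof (sqrt_pos (1 + t)).
  destruct (Rlt_le_dec 0 t) as [Hpos|Hnpos].
  - rewrite (Rabs_pos_eq t), F_integrand_0_pos in * by lra.
    pose proof (asin_nonneg_le_2x t ltac:(lra)).
    assert (sqrt (1 + t) <= 2).
    { rewrite <- (sqrt_square 2) by lra. apply sqrt_le_1_alt. lra. }
    assert (0 < / sqrt t) by (apply Rinv_0_lt_compat, sqrt_lt_R0, Hpos).
    replace (4 * sqrt t) with (4 * t / sqrt t)
      by (rewrite <- (sqrt_sqrt t) at 1 by lra; field; apply Rgt_not_eq, sqrt_lt_R0, Hpos).
    unfold Rdiv. rewrite Rabs_pos_eq by (apply Rmult_le_pos; nra).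
    apply Rmult_le_compat_r; nra.
  - rewrite (Rabs_left1 t), F_integrand_0_nonpos in * by lra.
    pose proof (asin_nonneg_le_2x (- t) ltac:(lra)) as Hasin. rewrite asin_opp in Hasin.
    assert (Hsqrt_le_1 : forall x, 0 <= x <= 1 -> sqrt x <= 1)
      by (intros x Hx; rewrite <- sqrt_1; apply sqrt_le_1_alt; lra).
    pose proof (Hsqrt_le_1 (1 + t) ltac:(lra)).
    pose proof (Hsqrt_le_1 (- t) ltac:(lra)).
    pose proof (sqrt_sqrt (- t) ltac:(lra)). pose proof (sqrt_pos (- t)).
    rewrite Rabs_left1 by nra. nra.
Qed.

Lemma continuous_F_integrand_0 (t : R) : 0 <= t <= 1 -> continuous (F_integrand 0) t.
Proof.
  intro Ht. destruct (Req_dec t 0) as [->|Ht0].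
  - apply (continuous_of_Rabs_le _ (fun y => 4 * sqrt (Rabs y))).
    + exists (mkposreal (1 / 2) ltac:(lra)). intros y Hy.
      change (Rabs (y - 0) < 1 / 2) in Hy. rewrite Rminus_0_r in Hy.
      rewrite (F_integrand_0_nonpos 0), asin_0, Rmult_0_r, Rminus_0_r by lra.
      apply Rabs_F_integrand_0_le. lra.
    + apply (continuous_mult (fun _ => 4) (fun y => sqrt (Rabs y))).
      * apply continuous_const.
      * apply continuous_sqrt_comp, continuous_Rabs.
    + rewrite Rabs_R0, sqrt_0. ring.
  - apply (continuous_mult (fun y => Rpower y (INR 0 - 1 / 2) * sqrt (1 + y)) asin).
    + apply (ex_derive_continuous (fun y => Rpower y (INR 0 - 1 / 2) * sqrt (1 + y))).
      unfold Rpower. auto_derive. lra.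
    + apply continuous_asin. lra.
Qed.

Lemma ex_RInt_F_integrand_0 : ex_RInt (F_integrand 0) 0 1.
Proof.
  apply (@ex_RInt_continuous R_CompleteNormedModule).
  rewrite Rmin_left, Rmax_right by lra. apply continuous_F_integrand_0.
Qed.

Lemma is_RInt_cos_sqr_integrand_F_integrand_0 :
  is_RInt cos_sqr_integrand 0 (PI / 2) (RInt (F_integrand 0) 0 1).
Proof.
  pose proof PI_RGT_0.
  pose proof (is_RInt_comp (F_integrand 0) (fun p => cos p * cos p)
                (fun p => - (2 * cos p * sin p)) 0 (PI / 2)) as Hsubst.
  cbv beta in Hsubst. rewrite cos_0, cos_PI2, Rmult_1_l, Rmult_0_l in Hsubst.
  apply (is_RInt_ext
           (fun p => opp (scal (- (2 * cos p * sin p)) (F_integrand 0 (cos p * cos p))))).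
  - rewrite Rmin_left, Rmax_right by lra. intros p Hp.
    assert (Hc : 0 < cos p) by (apply cos_gt_0; lra).
    rewrite F_integrand_0_pos, sqrt_square by nra.
    unfold cos_sqr_integrand, hypot1, opp, scal. simpl. unfold mult. simpl.
    field. lra.
  - rewrite <- (opp_opp (RInt (F_integrand 0) 0 1)), (opp_RInt_swap _ _ _ ex_RInt_F_integrand_0).
    apply (@is_RInt_opp R_NormedModule), Hsubst.
    + intros p _. apply continuous_F_integrand_0. pose proof (COS_bound p). split; nra.
    + intros p _. split.
      * auto_derive; [exact I | ring].
      * apply (ex_derive_continuous (fun p => - (2 * cos p * sin p))). auto_derive. exact I.
Qed.

Theorem lemma6p0p1 :
  is_RInt (F_integrand 0) 0 1
    (PI / 2 * (sqrt 2 - 1 + ln (sqrt 2 + 1) - ln 2))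
  /\ F 0 = PI / 2 * (sqrt 2 - 1 + ln (sqrt 2 + 1) - ln 2).
Proof.
  assert (HF : F 0 = PI / 2 * (sqrt 2 - 1 + ln (sqrt 2 + 1) - ln 2)).
  { unfold F. rewrite <- (is_RInt_unique _ _ _ _ is_RInt_cos_sqr_integrand_F_integrand_0).
    apply is_RInt_unique, is_RInt_cos_sqr_integrand. }
  split; [|exact HF].
  rewrite <- HF. apply (RInt_correct (F_integrand 0)), ex_RInt_F_integrand_0.
Qed.
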